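(* Let $0<k<n$. Suppose that $M(\pi_{k,n})$ contains a non-saturated subset. Then $M(\pi_{k,n+k})$ contains a non-saturated subset.
   Context: For integers $0<k<n$: $\varepsilon_1,\dots,\varepsilon_n$ is the standard basis of $\mathbb Q^n$, $e_i=\varepsilon_i-\frac1n(1,\dots,1)\in\mathbb Q^n$ (so $e_1+\dots+e_n=0$), and $M(\pi_{k,n})=\{e_{i_1}+\dots+e_{i_k}\mid 1\le i_1<\dots<i_k\le n\}$ (the set of $T$-weights of $\Lambda^k\Bbbk^n$ for $SL(n)$). A finite set $\{v_1,\dots,v_m\}$ is saturated if $\mathbb Z_+(v_1,\dots,v_m)=\mathbb Z(v_1,\dots,v_m)\cap\mathbb Q_+(v_1,\dots,v_m)$ (combinations with non-negative integer, integer, non-negative rational coefficients respectively); otherwise it is non-saturated. *)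

From HB Require Import structures.
From mathcomp Require Import all_boot all_order all_algebra.
Set Implicit Arguments. Unset Strict Implicit. Unset Printing Implicit Defensive.
Import Order.TTheory GRing.Theory Num.Theory.
Local Open Scope ring_scope.

Definition evec (n : nat) (i : 'I_n) : 'rV[rat]_n :=
  delta_mx 0 i - (n%:R)^-1 *: const_mx 1.

(* v \in M(pi_{k,n}) : v = e_{i_1} + ... + e_{i_k} with i_1 < ... < i_k *)
Definition inM (k : nat) (n : nat) (v : 'rV[rat]_n) : Prop :=
  exists S : {set 'I_n}, #|S| = k /\ v = \sum_(i in S) evec i.

Arguments inM k n v : clear implicits.

Definition inZplus (n : nat) (s : seq 'rV[rat]_n) (v : 'rV[rat]_n) : Prop :=
  exists c : 'I_(size s) -> nat, v = \sum_(i < size s) (c i)%:R *: s`_i.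
Definition inZspan (n : nat) (s : seq 'rV[rat]_n) (v : 'rV[rat]_n) : Prop :=
  exists c : 'I_(size s) -> int, v = \sum_(i < size s) (c i)%:~R *: s`_i.
Definition inQplus (n : nat) (s : seq 'rV[rat]_n) (v : 'rV[rat]_n) : Prop :=
  exists c : 'I_(size s) -> rat,
    (forall i, 0 <= c i) /\ v = \sum_(i < size s) c i *: s`_i.

(* Z_+(s) = Z(s) ∩ Q_+(s) ; the inclusion ⊆ is automatic *)
Definition saturated (n : nat) (s : seq 'rV[rat]_n) : Prop :=
  forall v, inZspan s v -> inQplus s v -> inZplus s v.

From HB Require Import structures.
From mathcomp Require Import all_boot all_order all_algebra.
From mathcomp Require Import ring.
Set Implicit Arguments. Unset Strict Implicit. Unset Printing Implicit Defensive.
Import Order.TTheory GRing.Theory Num.Theory.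
Local Open Scope ring_scope.

(* A non-saturated family lifts to a non-saturated family in a bigger space
   by an "affine cone" construction.  Let P : Q^n -> Q^N be linear, w in Q^N,
   0 <= lam <= 1, and assume  x P + b w = 0  forces x = 0.  Put
   f x := x P - lam w.  If  w :: map f s  is saturated then so is s: given
   v in Z(s) ∩ Q_+(s) with integer coefficients a, the vector
   v P + (|sum a| - lam sum a) w  lies in Z(w :: f s) ∩ Q_+(w :: f s), so it is
   a non-negative integer combination of w :: f s, and projecting back along
   w (the freeness hypothesis) exhibits v in Z_+(s).
   For the theorem take N = n + k, P = padding by k zero coordinates,
   w = e_{n+1} + ... + e_{n+k} and lam = k/n.  Then f maps
   e_{i_1} + ... + e_{i_k} in M(pi_{k,n}) to the same sum of basis vectors of
   Q^(n+k), hence f(M(pi_{k,n})) ⊆ M(pi_{k,n+k}), and w ∈ M(pi_{k,n+k}). *)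

Section ConeExtension.
Variables (n N : nat) (P : 'M[rat]_(n, N)) (w : 'rV[rat]_N) (lam : rat).
Hypotheses (lam_ge0 : 0 <= lam) (lam_le1 : lam <= 1).
Hypothesis P_w_free : forall x b, x *m P + b *: w = 0 -> x = 0.

Definition cone_lift (x : 'rV[rat]_n) : 'rV[rat]_N := x *m P - lam *: w.

Variable s : seq 'rV[rat]_n.

Let t := w :: map cone_lift s.

Definition tail_index (j : 'I_(size s)) : 'I_(size t) :=
  lift ord0 (cast_ord (esym (size_map cone_lift s)) j).

Definition cons_coef (X : Type) (c0 : X) (d : 'I_(size s) -> X) (i : 'I_(size t)) : X :=
  if unlift ord0 i is Some j then d (cast_ord (size_map cone_lift s) j) else c0.

Lemma cons_coef0 X (c0 : X) d : cons_coef c0 d ord0 = c0.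
Proof. by rewrite /cons_coef unlift_none. Qed.

Lemma cons_coefS X (c0 : X) d j : cons_coef c0 d (tail_index j) = d j.
Proof. by rewrite /cons_coef /tail_index liftK cast_ordKV. Qed.

Lemma comb_cons_lift (c : 'I_(size t) -> rat) c0 (d : 'I_(size s) -> rat) :
  c ord0 = c0 -> (forall j, c (tail_index j) = d j) ->
  \sum_i c i *: t`_i = (\sum_j d j *: s`_j) *m P + (c0 - lam * \sum_j d j) *: w.
Proof.
move=> <- cS; rewrite big_ord_recl /= addrC.
rewrite (reindex (cast_ord (esym (size_map cone_lift s)))) /=; last first.
  by exists (cast_ord (size_map cone_lift s)) => i _; rewrite ?cast_ordK ?cast_ordKV.
under eq_bigr => j _ do rewrite (nth_map 0) ?ltn_ord // /cone_lift
  scalerBr scalemxAl scalerA [_ * lam]mulrC (cS j).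
by rewrite sumrB -mulmx_suml -!scaler_suml -mulr_sumr scalerBl addrA addrAC.
Qed.

Lemma free_cancel x y b c : x *m P + b *: w = y *m P + c *: w -> x = y.
Proof.
move=> /eqP; rewrite -subr_eq0 opprD addrACA -mulmxBl -scalerBl => /eqP.
by move/P_w_free/eqP; rewrite subr_eq0 => /eqP.
Qed.

(* Main transfer lemma: saturation of the lifted family implies saturation
   of s.  The weight |sum a| on w keeps the rational combination non-negative
   because lam <= 1. *)
Lemma saturated_cone_ext : saturated t -> saturated s.
Proof.
move=> sat v [a Ha] [q [q_ge0 Hq]].
pose A : rat := \sum_j (a j)%:~R.
pose al : int := `|\sum_j a j|.
pose v' := v *m P + (al%:~R - lam * A) *: w.
have lamA_le : lam * A <= al%:~R.
  rewrite /al intr_norm rmorph_sum -/A.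
  apply: le_trans (ler_norm _) _; rewrite normrM (ger0_norm lam_ge0).
  by rewrite ler_piMl.
have [m Hm] : inZplus t v'.
  apply: sat.
    exists (cons_coef al a).
    by rewrite (comb_cons_lift (c0 := al%:~R) (d := fun j => (a j)%:~R)) ?cons_coef0 // => [|j];
      [rewrite -Ha | rewrite cons_coefS].
  pose q0 := al%:~R - lam * A + lam * \sum_j q j.
  exists (cons_coef q0 q); split.
    move=> i; rewrite /cons_coef; case: unlift => [j|] //.
    by rewrite addr_ge0 ?mulr_ge0 ?sumr_ge0 // subr_ge0.
  rewrite (comb_cons_lift (c0 := q0) (d := q)) ?cons_coef0 // => [|j]; last by rewrite cons_coefS.
  by rewrite -Hq /q0 addrK.
exists (fun j => m (tail_index j)).
apply: (free_cancel (b := al%:~R - lam * A)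
  (c := (m ord0)%:R - lam * \sum_j (m (tail_index j))%:R)).
by rewrite -/v' Hm; apply: comb_cons_lift.
Qed.
End ConeExtension.

Lemma sum_evecE n (S : {set 'I_n}) r j :
  (\sum_(i in S) evec i) r j = (j \in S)%:R - #|S|%:R / n%:R.
Proof.
rewrite (ord1 r) summxE.
under eq_bigr do rewrite /evec !mxE eqxx /= mulr1.
rewrite sumrB sumr_const -[_ *+ _]mulr_natl mulrC; congr (_ - _).
case: (boolP (j \in S)) => jS.
  rewrite (bigD1 j) //= eqxx big1 ?addr0 // => i /andP[_ ij].
  by rewrite eq_sym (negbTE ij).
by rewrite big1 // => i iS; case: eqP => // ij; rewrite ij iS in jS.
Qed.

Section Embedding.
Variables k n : nat.
Hypotheses (k_gt0 : (0 < k)%N) (k_le_n : (k <= n)%N).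

Definition tail_set : {set 'I_(n + k)} := [set rshift n j | j : 'I_k].
Definition wT : 'rV[rat]_(n + k) := \sum_(i in tail_set) evec i.
Definition pad : 'M[rat]_(n, n + k) := row_mx 1%:M 0.
Definition ratio : rat := k%:R / n%:R.

Lemma card_tail_set : #|tail_set| = k.
Proof. by rewrite card_imset ?card_ord //; apply: rshift_inj. Qed.

Lemma wT_inM : inM k (n + k) wT.
Proof. by exists tail_set; rewrite card_tail_set. Qed.

Lemma pad_mul (x : 'rV[rat]_n) : x *m pad = row_mx x 0.
Proof. by rewrite mul_mx_row mulmx1 mulmx0. Qed.

Lemma n_neq0 : n%:R != 0 :> rat.
Proof. by rewrite pnatr_eq0 -lt0n (leq_trans k_gt0). Qed.

Lemma nk_neq0 : n%:R + k%:R != 0 :> rat.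
Proof. by rewrite -natrD pnatr_eq0 addn_eq0 negb_and -!lt0n k_gt0 orbT. Qed.

Lemma wT_lshift j : wT 0 (lshift k j) = - (k%:R / (n + k)%:R).
Proof.
rewrite /wT sum_evecE card_tail_set (_ : lshift k j \in tail_set = false) ?sub0r //.
by apply/imsetP => -[i _ /eqP]; rewrite eq_lrshift.
Qed.

Lemma wT_rshift j : wT 0 (rshift n j) = 1 - k%:R / (n + k)%:R.
Proof.
by rewrite /wT sum_evecE card_tail_set (_ : rshift n j \in tail_set) //; apply: imset_f.
Qed.

Lemma shift_inM x : inM k n x -> inM k (n + k) (cone_lift pad wT ratio x).
Proof.
move=> [S [cardS ->]].
have cardSl : #|[set lshift k i | i in S]| = k.
  by rewrite card_imset //; apply: lshift_inj.
exists [set lshift k i | i in S]; split => //.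
have memS j' : (lshift k j' \in [set lshift k i | i in S]) = (j' \in S).
  exact/mem_imset/lshift_inj.
have memS_r j' : (rshift n j' \in [set lshift k i | i in S]) = false.
  by apply/imsetP => -[i _ /eqP]; rewrite eq_rlshift.
apply/matrixP => r j; rewrite (ord1 r) /cone_lift pad_mul !mxE [in RHS]sum_evecE cardSl.
case: split_ordP => j' ->.
  rewrite wT_lshift /= sum_evecE cardS memS /ratio natrD.
  by field; rewrite nk_neq0 n_neq0.
rewrite wT_rshift mxE memS_r /ratio natrD /=.
by field; rewrite nk_neq0 n_neq0.
Qed.

(* The apex has a nonzero coordinate outside the image of the padding. *)
Lemma pad_wT_free (x : 'rV[rat]_n) b : x *m pad + b *: wT = 0 -> x = 0.
Proof.
rewrite pad_mul => E.
have tail_ne0 : 1 - k%:R / (n + k)%:R != 0 :> rat.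
  have -> : 1 - k%:R / (n + k)%:R = n%:R / (n%:R + k%:R) :> rat.
    by rewrite natrD; field; rewrite nk_neq0.
  by rewrite mulf_neq0 ?invr_eq0 ?n_neq0 ?nk_neq0.
have b0 : b = 0.
  have := congr1 (fun M : 'rV_(n + k) => M 0 (rshift n (Ordinal k_gt0))) E.
  rewrite mxE [X in X + _]row_mxEr [X in _ + X]mxE wT_rshift !mxE add0r.
  by move/eqP; rewrite mulf_eq0 (negbTE tail_ne0) orbF => /eqP.
by move: E; rewrite b0 scale0r addr0 -row_mx0 => /eq_row_mx [].
Qed.

Lemma ratio_ge0 : 0 <= ratio.
Proof. by rewrite /ratio divr_ge0 ?ler0n. Qed.

Lemma ratio_le1 : ratio <= 1.
Proof.
by rewrite /ratio ler_pdivrMr ?ltr0n ?(leq_trans k_gt0) // mul1r ler_nat.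
Qed.
End Embedding.

Theorem lemma5 (k n : nat) (hk : (0 < k)%N) (hkn : (k < n)%N) :
  (exists s : seq 'rV[rat]_n, (forall v, v \in s -> inM k n v) /\ ~ saturated s) ->
  exists s : seq 'rV[rat]_(n + k), (forall v, v \in s -> inM k (n + k) v) /\ ~ saturated s.
Proof.
have k_le_n : (k <= n)%N := ltnW hkn.
move=> [s [s_inM s_nonsat]].
exists (wT k n :: map (cone_lift (pad k n) (wT k n) (ratio k n)) s); split.
  move=> v; rewrite inE => /predU1P [-> | /mapP [x xs ->]].
    exact: wT_inM.
  by apply: shift_inM => //; apply: s_inM.
move/saturated_cone_ext => sat; apply/s_nonsat/sat.
- exact: ratio_ge0.
- exact: ratio_le1.
- exact: pad_wT_free.
Qed.
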